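(* Let $N=(V,E,c,K)$ be a network with killing and let $(X_n)_{n\geq0}$ be the random walk on $N$ started at some $x\in V$. Then for every $m,n\geq0$, \[ \mathbb{E}\left[\frac{p_m(X_n,X_0)}{p_n(X_n,X_0)}\right]\leq\mathbb{P}(X_m\neq\dagger)+\mathbb{P}(X_n=\dagger)\leq2, \] with the convention that the ratio equals $1$ when $X_n=\dagger$.
   Context: A network with killing is $N=(V,E,c,K)$ where $(V,E)$ is a graph, $c:E\to(0,\infty)$ are conductances and $K:V\to[0,\infty)$ is a killing function. With $c(u)$ the total conductance of oriented edges emanating from $u$ and $c(u,v)$ the total conductance of oriented edges from $u$ to $v$, the random walk on $N$ is the Markov chain on $V\cup\{\dagger\}$ with $P(u,v)=c(u,v)/(c(u)+K(u))$ and $P(u,\dagger)=K(u)/(c(u)+K(u))$ for $u,v\in V$, and $P(\dagger,\dagger)=1$. Write $p_n(u,v)=P^n(u,v)$. *)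

From HB Require Import structures.
From mathcomp Require Import all_boot all_order all_algebra.
From mathcomp Require Import all_classical all_reals all_analysis.
Set Implicit Arguments. Unset Strict Implicit. Unset Printing Implicit Defensive.
Import Order.TTheory GRing.Theory Num.Theory.
Local Open Scope classical_set_scope.
Local Open Scope ring_scope.
Local Open Scope ereal_scope.

(* A network with killing N = (V, E, c, K):
   - (V, E) is an undirected multigraph (loops and multiple edges allowed):
     each edge e : E has an (unordered) pair of endpoints [ends e];
   - c : E -> (0, oo) conductances, K : V -> [0, oo) killing.
   Each edge e yields two oriented edges (e, true), (e, false). *)
Section Network.
Variables (R : realType) (V E : choiceType) (ends : E -> V * V) (c : E -> R)
  (K : V -> R).

Definition otail (o : E * bool) : V :=
  if o.2 then (ends o.1).1 else (ends o.1).2.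
Definition ohead (o : E * bool) : V :=
  if o.2 then (ends o.1).2 else (ends o.1).1.

Definition cond2 (u v : V) : \bar R :=
  \esum_(o in [set o | otail o = u /\ ohead o = v]) (c o.1)%:E.

Definition cond1 (u : V) : \bar R :=
  \esum_(o in [set o | otail o = u]) (c o.1)%:E.

(* Transition kernel of the random walk on V ∪ {†}, with † = None. *)
Definition trans (y z : option V) : \bar R :=
  match y, z with
  | Some u, Some v => (fine (cond2 u v) / (fine (cond1 u) + K u))%R%:E
  | Some u, None => (K u / (fine (cond1 u) + K u))%R%:E
  | None, None => 1
  | None, Some _ => 0
  end.

Fixpoint pn (n : nat) (y z : option V) : \bar R :=
  match n with
  | O => if y == z then 1 else 0
  | S k => \esum_(w in [set: option V]) (pn k y w * trans w z)
  end.

(* For the walk (X_n) started at x: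
   E[ p_m(X_n,X_0) / p_n(X_n,X_0) ], with ratio := 1 when X_n = †.
   Computed through the law of X_n (X_0 = x a.s.): P(X_n = y) = p_n(x,y). *)
Definition ratio (m n : nat) (x : V) (y : option V) : \bar R :=
  match y with
  | None => 1
  | Some v => (fine (pn m (Some v) (Some x)) / fine (pn n (Some v) (Some x)))%R%:E
  end.

Definition exp_ratio (m n : nat) (x : V) : \bar R :=
  \esum_(y in [set: option V]) (pn n (Some x) y * ratio m n x y).

Definition prob_alive (m : nat) (x : V) : \bar R :=
  \esum_(y in [set y : option V | y <> None]) pn m (Some x) y.
Definition prob_dead (n : nat) (x : V) : \bar R := pn n (Some x) None.

End Network.

(* Write pi(u) = c(u) + K(u).  One step of the walk satisfies detailed balance
   pi(u) P(u,v) = pi(v) P(v,u) on V, which is just the symmetry c(u,v) = c(v,u);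
   since † is absorbing, the Chapman-Kolmogorov equation propagates
   it to pi(u) p_k(u,v) = pi(v) p_k(v,u) for every k.  Hence on the event
   X_n = v in V the summand p_n(x,v) p_m(v,x) / p_n(v,x) equals p_m(x,v) (or
   vanishes when p_n(v,x) = 0), so the part of the expectation where the walk
   is alive is at most sum_v p_m(x,v) = P(X_m <> †), while the killed part
   is P(X_n = †). *)

From Pilot Require Import Defs.
From HB Require Import structures.
From mathcomp Require Import all_boot all_order all_algebra.
From mathcomp Require Import all_classical all_reals all_analysis.
From mathcomp Require Import ring.
Set Implicit Arguments. Unset Strict Implicit. Unset Printing Implicit Defensive.
Import Order.TTheory GRing.Theory Num.Theory.
Local Open Scope classical_set_scope.
Local Open Scope ring_scope.

Lemma balanced_ratio_le (R : realFieldType) (wx wv a b r s : R) :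
  0 < wx -> 0 < wv -> 0 <= s -> wx * a = wv * b -> wx * s = wv * r ->
  a * (r / b) <= s.
Proof.
move=> wx_gt0 wv_gt0 s_ge0 ab sr; have [->|b_neq0] := eqVneq b 0.
  by rewrite invr0 !mulr0.
suff -> : a * (r / b) = s by [].
apply: (mulfI (lt0r_neq0 wx_gt0)) => /=.
by rewrite sr (mulrA wx) ab; field.
Qed.

Local Open Scope ereal_scope.

Section ESum.
Variable R : realType.
Implicit Types (T : choiceType).

Lemma le_term_esum T (I : set T) (a : T -> \bar R) t :
  (forall i, 0 <= a i) -> I t -> a t <= \esum_(i in I) a i.
Proof.
move=> a0 It; apply: esum_ge; exists [set t]; last by rewrite fsbig_set1.
by split=> [|_ ->//]; exact: finite_set1.
Qed.

Lemma esumZl T (I : set T) (a : T -> \bar R) (r : \bar R) :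
  0 <= r -> (forall i, 0 <= a i) ->
  \esum_(i in I) (r * a i) = r * \esum_(i in I) a i.
Proof.
move=> r0 a0; case: r r0 => [r| |] //; rewrite ?lee_fin => r0.
  move: r0; rewrite le_eqVlt => /orP[/eqP<-|r0].
    by rewrite mul0e esum1 // => i _; rewrite mul0e.
  rewrite /esum -ereal_sup_pZl //; congr ereal_sup.
  apply/seteqP; split => y /=.
    case=> A IA <-; exists (\sum_(x \in A) a x); first by exists A.
    by rewrite ge0_mule_fsumr.
  by case=> _ [A IA <-] <-; exists A => //; rewrite ge0_mule_fsumr.
have := @esum_ge0 _ _ I a (fun i _ => a0 i); rewrite le_eqVlt => /orP[/eqP s0|s_gt0].
  have a_eq0 i : I i -> a i = 0.
    by move=> Ii; apply/eqP; rewrite eq_le a0 andbT s0 le_term_esum.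
  by rewrite -s0 mule0 esum1 // => i Ii; rewrite a_eq0 // mule0.
have [j Ij aj] : exists2 j, I j & 0 < a j.
  apply: contrapT => nj; move: s_gt0; rewrite esum1 ?ltxx // => i Ii.
  apply/eqP; rewrite eq_le a0 andbT leNgt; apply/negP => ai; apply: nj.
  by exists i.
rewrite gt0_mulye //; apply/eqP; rewrite eq_le leey /=.
have := le_term_esum (a := fun i => +oo * a i) _ Ij; rewrite gt0_mulye //.
by apply=> // i; rewrite mule_ge0.
Qed.

Lemma esumZr T (I : set T) (a : T -> \bar R) (r : \bar R) :
  0 <= r -> (forall i, 0 <= a i) ->
  \esum_(i in I) (a i * r) = (\esum_(i in I) a i) * r.
Proof.
by move=> r0 a0; rewrite muleC -esumZl //; apply: eq_esum => i _; rewrite muleC.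
Qed.

Lemma exchange_esum T1 T2 (F : T1 -> T2 -> \bar R) :
  (forall i j, 0 <= F i j) ->
  \esum_(i in [set: T1]) \esum_(j in [set: T2]) F i j =
  \esum_(j in [set: T2]) \esum_(i in [set: T1]) F i j.
Proof.
move=> F0; rewrite !esum_esum //.
rewrite (reindex_esum ([set: T2] `*`` (fun _ => [set: T1]))
   ([set: T1] `*`` (fun _ => [set: T2])) (fun k => (k.2, k.1))) //.
split=> [k _ //|[a b] [a' b'] _ _ /= [-> ->] //|[a b] _]; by exists (b, a).
Qed.

Lemma esum_delta T (a : T -> \bar R) t :
  (forall i, 0 <= a i) ->
  \esum_(i in [set: T]) (if t == i then a i else 0) = a t.
Proof.
move=> a0; rewrite (esumID [set t]); last by move=> i _; case: ifP.
rewrite setTI esum_set1 ?eqxx // esum1 ?adde0 // => i [_ /= /eqP].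
by rewrite eq_sym => /negPf ->.
Qed.

Lemma esum_option T (a : option T -> \bar R) :
  (forall i, 0 <= a i) ->
  \esum_(i in [set: option T]) a i = \esum_(v in [set: T]) a (Some v) + a None.
Proof.
move=> a0; rewrite (esumID [set None]) // setTI esum_set1 // addeC.
congr (_ + _); rewrite (reindex_esum [set: T] _ Some) //.
by split=> [v _ //|u v _ _ [] //|[v|] [_ /= nN] //]; exists v.
Qed.

End ESum.

Section KernelPower.
Variables (R : realType) (T : choiceType) (Q : T -> T -> \bar R).
Hypothesis Q_ge0 : forall y z, 0 <= Q y z.

Fixpoint kpow (n : nat) (y z : T) : \bar R :=
  match n with
  | O => if y == z then 1 else 0
  | S k => \esum_(w in [set: T]) (kpow k y w * Q w z)
  end.

Lemma kpow_ge0 n y z : 0 <= kpow n y z.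
Proof.
elim: n z => [|n IHn] z /=; first by case: ifP.
by apply: esum_ge0 => w _; rewrite mule_ge0.
Qed.

Lemma kpowD a b y z :
  kpow (a + b) y z = \esum_(w in [set: T]) (kpow a y w * kpow b w z).
Proof.
elim: b z => [|b IHb] z.
  rewrite addn0 -(esum_delta (a := kpow a y)) //; last exact: kpow_ge0.
  by apply: eq_esum => w _ /=; rewrite eq_sym; case: eqP; rewrite ?mule1 ?mule0.
rewrite addnS /=.
transitivity (\esum_(u in [set: T]) \esum_(w in [set: T])
    (kpow a y w * kpow b w u * Q u z)).
  apply: eq_esum => u _; rewrite IHb -esumZr ?kpow_ge0 //.
  by move=> w; rewrite mule_ge0 ?kpow_ge0.
rewrite exchange_esum; last by move=> u w; rewrite !mule_ge0 ?kpow_ge0.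
apply: eq_esum => w _; rewrite -esumZl ?kpow_ge0 //; last first.
  by move=> u; rewrite mule_ge0 ?kpow_ge0.
by apply: eq_esum => u _; rewrite muleA.
Qed.

Lemma kpow1 y z : kpow 1 y z = Q y z.
Proof.
rewrite /= -(esum_delta (a := Q^~ z) y) //.
by apply: eq_esum => u _; case: eqP; rewrite ?mul1e ?mul0e.
Qed.

Lemma kpowSl k y z :
  kpow k.+1 y z = \esum_(w in [set: T]) (Q y w * kpow k w z).
Proof. by rewrite -add1n kpowD; under eq_esum do rewrite kpow1. Qed.

Section Substochastic.
Hypothesis Q_sub : forall y, \esum_(z in [set: T]) Q y z <= 1.

Lemma kpow_sum_le1 k y : \esum_(z in [set: T]) kpow k y z <= 1.
Proof.
elim: k y => [|k IHk] y /=.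
  by rewrite (esum_delta (a := fun _ => 1)).
rewrite exchange_esum; last by move=> z w; rewrite mule_ge0 ?kpow_ge0.
apply: le_trans (IHk y); apply: le_esum => w _.
rewrite esumZl ?kpow_ge0 //.
by rewrite -[leRHS]mule1 lee_wpmul2l ?kpow_ge0.
Qed.

Lemma kpow_le1 k y z : kpow k y z <= 1.
Proof.
by apply: le_trans (kpow_sum_le1 k y); apply: le_term_esum => //; exact: kpow_ge0.
Qed.

Lemma kpow_fin_num k y z : kpow k y z \is a fin_num.
Proof. by rewrite ge0_fin_numE ?kpow_ge0 // (le_lt_trans (kpow_le1 k y z)) ?ltry. Qed.

End Substochastic.

Section DetailedBalance.
Variables (A : set T) (w : T -> R).
Hypothesis compl_absorbing : forall y z, ~ A y -> A z -> Q y z = 0.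
Hypothesis w_ge0 : forall y, A y -> (0 <= w y)%R.
Hypothesis Q_balance :
  forall y z, A y -> A z -> (w y)%:E * Q y z = (w z)%:E * Q z y.

Lemma kpow_from_compl k y z : ~ A y -> A z -> kpow k y z = 0.
Proof.
elim: k z => [|k IHk] z nAy Az /=.
  by case: eqP => // yz; move: nAy; rewrite yz.
apply: esum1 => u _; have [Au|nAu] := pselect (A u).
  by rewrite IHk ?mul0e.
by rewrite compl_absorbing ?mule0.
Qed.

Lemma kpow_balance k y z : A y -> A z ->
  (w y)%:E * kpow k y z = (w z)%:E * kpow k z y.
Proof.
elim: k y z => [|k IHk] y z Ay Az.
  by rewrite /=; case: (eqVneq y z) => [->|_]; rewrite ?mule0.
rewrite kpowSl /= -!esumZl ?lee_fin ?w_ge0 //; last 2 first.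
- by move=> u; rewrite mule_ge0 ?kpow_ge0.
- by move=> u; rewrite mule_ge0 ?kpow_ge0.
apply: eq_esum => u _; have [Au|nAu] := pselect (A u).
  by rewrite muleA Q_balance // muleAC IHk // -muleA.
by rewrite (kpow_from_compl k nAu Az) (compl_absorbing nAu Ay) !mule0.
Qed.

End DetailedBalance.
End KernelPower.

Section Network.
Variables (R : realType) (V E : choiceType) (ends : E -> V * V)
  (c : E -> R) (K : V -> R).
Hypothesis c_gt0 : forall e, (0 < c e)%R.
Hypothesis K_ge0 : forall u, (0 <= K u)%R.
Hypothesis cond1_lty : forall u, cond1 ends c u < +oo.
Hypothesis pi_gt0 : forall u, (0 < fine (cond1 ends c u) + K u)%R.

Local Notation pi u := (fine (cond1 ends c u) + K u)%R.
Local Notation P := (trans ends c K).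

Lemma cond1_ge0 u : 0 <= cond1 ends c u.
Proof. by apply: esum_ge0 => o _; rewrite lee_fin ltW. Qed.

Lemma cond2_ge0 u v : 0 <= cond2 ends c u v.
Proof. by apply: esum_ge0 => o _; rewrite lee_fin ltW. Qed.

Lemma cond2_sum u : \esum_(v in [set: V]) cond2 ends c u v = cond1 ends c u.
Proof.
rewrite esum_esum; last by move=> v o _ _; rewrite lee_fin ltW.
rewrite /cond1 (reindex_esum [set o | otail ends o = u]
   ([set: V] `*`` (fun v => [set o | otail ends o = u /\ Defs.ohead ends o = v]))
   (fun o => (Defs.ohead ends o, o))) //.
split=> [q //|q q' _ _ [] //|].
by move=> [v o] /= [_ [ou <-]]; exists o.
Qed.

Lemma cond2C u v : cond2 ends c u v = cond2 ends c v u.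
Proof.
rewrite /cond2 (reindex_esum [set o | otail ends o = v /\ Defs.ohead ends o = u]
   [set o | otail ends o = u /\ Defs.ohead ends o = v] (fun o => (o.1, ~~ o.2))) //.
rewrite /otail /Defs.ohead; split.
- by move=> [d []] /= [-> ->].
- by move=> [d b] [d' b'] _ _ /= [-> /negb_inj ->].
- by move=> [d b] /= uv; exists (d, ~~ b); rewrite ?negbK //; case: b uv => /= -[-> ->].
Qed.

Lemma cond2_fin_num u v : cond2 ends c u v \is a fin_num.
Proof.
rewrite ge0_fin_numE ?cond2_ge0 // (le_lt_trans _ (cond1_lty u)) //.
by rewrite -cond2_sum; apply: le_term_esum => // w; exact: cond2_ge0.
Qed.

Lemma trans_ge0 y z : 0 <= P y z.
Proof.
case: y z => [u|] [v|] //=; rewrite lee_fin divr_ge0 ?(ltW (pi_gt0 u)) //.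
by rewrite fine_ge0 // cond2_ge0.
Qed.

Lemma trans_sum_le1 y : \esum_(z in [set: option V]) P y z <= 1.
Proof.
rewrite esum_option; last exact: trans_ge0.
case: y => [u|] /=; last by rewrite esum1 ?add0e.
under eq_esum do rewrite mulrC EFinM fineK ?cond2_fin_num //.
rewrite esumZl ?lee_fin ?invr_ge0 ?(ltW (pi_gt0 u)) //; last exact: cond2_ge0.
rewrite cond2_sum -(fineK (x := cond1 ends c u)); last first.
  by rewrite ge0_fin_numE ?cond1_ge0.
by rewrite -EFinM -EFinD lee_fin /= mulrC -mulrDl divff // gt_eqF.
Qed.

Definition alive : set (option V) := [set y | y <> None].

Lemma trans_from_dead y z : ~ alive y -> alive z -> P y z = 0.
Proof. by case: y z => [u|] [v|] // nAy; case: nAy. Qed.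

Definition weight (y : option V) : R := if y is Some u then pi u else 0.

Lemma trans_balance y z : alive y -> alive z ->
  (weight y)%:E * P y z = (weight z)%:E * P z y.
Proof.
case: y z => [u|] [v|] // _ _ /=; rewrite -!EFinM cond2C; congr EFin.
by field; rewrite !gt_eqF.
Qed.

Local Notation p := (pn ends c K).

Lemma pnE n y z : p n y z = kpow P n y z.
Proof. by elim: n z => [|n IHn] z //=; apply: eq_esum => w _; rewrite IHn. Qed.

Lemma pn_ge0 n y z : 0 <= p n y z.
Proof. by rewrite pnE kpow_ge0 //; exact: trans_ge0. Qed.

Lemma pn_le1 n y z : p n y z <= 1.
Proof. by rewrite pnE kpow_le1 //; [exact: trans_ge0 | exact: trans_sum_le1]. Qed.

Lemma pn_sum_le1 n y : \esum_(z in [set: option V]) p n y z <= 1.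
Proof.
under eq_esum do rewrite pnE.
by apply: kpow_sum_le1; [exact: trans_ge0 | exact: trans_sum_le1].
Qed.

Lemma pn_fin_num n y z : p n y z \is a fin_num.
Proof. by rewrite pnE kpow_fin_num //; [exact: trans_ge0 | exact: trans_sum_le1]. Qed.

Lemma pn_balance n u v :
  (pi u * fine (p n (Some u) (Some v)) = pi v * fine (p n (Some v) (Some u)))%R.
Proof.
apply: EFin_inj; rewrite !EFinM !fineK ?pn_fin_num // !pnE.
have weight_ge0 y : alive y -> (0 <= weight y)%R.
  by case: y => [w|] // _; exact/ltW/pi_gt0.
exact: (kpow_balance trans_ge0 trans_from_dead weight_ge0 trans_balance).
Qed.

Lemma prob_aliveE m x :
  prob_alive ends c K m x = \esum_(v in [set: V]) p m (Some x) (Some v).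
Proof.
rewrite /prob_alive (reindex_esum [set: V] _ Some) //.
by split=> [v _ //|u w _ _ [] //|[w|] //= _]; exists w.
Qed.

Lemma prob_alive_le1 m x : prob_alive ends c K m x <= 1.
Proof.
rewrite prob_aliveE; apply: le_trans (pn_sum_le1 m (Some x)).
by rewrite esum_option; [exact/leeDl/pn_ge0 | exact: pn_ge0].
Qed.

Lemma exp_ratio_le m n x :
  exp_ratio ends c K m n x <= prob_alive ends c K m x + prob_dead ends c K n x.
Proof.
rewrite /exp_ratio esum_option; last first.
  move=> [v|] /=; rewrite ?mule1 ?pn_ge0 // mule_ge0 ?pn_ge0 // lee_fin.
  by rewrite divr_ge0 ?fine_ge0 ?pn_ge0.
rewrite prob_aliveE /prob_dead /= mule1 leeD2r //; apply: le_esum => v _.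
rewrite -[p n _ _]fineK ?pn_fin_num // -EFinM -[p m (Some x) _]fineK ?pn_fin_num //.
by rewrite lee_fin (balanced_ratio_le (pi_gt0 x) (pi_gt0 v)) ?fine_ge0 ?pn_ge0 //;
  exact: pn_balance.
Qed.

End Network.

Theorem lemma3p3 (R : realType) (V E : choiceType) (ends : E -> V * V)
  (c : E -> R) (K : V -> R)
  (c_pos : forall e, (0 < c e)%R)
  (K_ge0 : forall u, (0 <= K u)%R)
  (c_fin : forall u, cond1 ends c u < +oo)
  (walk_def : forall u, (0 < fine (cond1 ends c u) + K u)%R)
  (x : V) (m n : nat) :
  exp_ratio ends c K m n x <= prob_alive ends c K m x + prob_dead ends c K n x
  /\ prob_alive ends c K m x + prob_dead ends c K n x <= 2%:E.
Proof.
split; first exact: exp_ratio_le.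
apply: le_trans (leeD (prob_alive_le1 c_pos K_ge0 c_fin walk_def m x)
                      (pn_le1 c_pos K_ge0 c_fin walk_def n (Some x) None)) _.
by rewrite -EFinD lee_fin.
Qed.
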